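(* Let $G\subset\mathrm{Isom}(\mathbf H^n)$ be a non-elementary finitely generated torsion-free Kleinian group and $H$ a subgroup of $G$ with $\mathrm{Ax}(G)=\mathrm{Ax}(H)$. Then for every hyperbolic element $g\in G$ there is an integer $n>0$ with $g^n\in H$.
   Context: A Kleinian group is a discrete subgroup of $\mathrm{Isom}(\mathbf{H}^n)$; non-elementary means its limit set has at least three points. A hyperbolic element is an isometry with exactly two fixed points, both at infinity; its axis is the geodesic joining them. $\mathrm{Ax}(G)$ is the set of axes of hyperbolic elements of $G$. *)

(* real hyperbolic geometry via the hyperboloid model.
   Isom(H^n) is identified with O^+(n,1) (Lorentz matrices preserving the upper sheet).
   Vectors/matrices are functions on nat; only indices 0..n are meaningful. *)
From Stdlib Require Import Reals List Arith Bool.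
Open Scope R_scope.

Definition vec := nat -> R.
Definition mat := nat -> nat -> R.

Definition eta (i : nat) : R := if Nat.eqb i 0 then -1 else 1.

Definition lor (n : nat) (x y : vec) : R := sum_f_R0 (fun k => eta k * x k * y k) n.

(* matrices are normalized to vanish outside the index range 0..n *)
Definition inrange (n i j : nat) : bool := Nat.leb i n && Nat.leb j n.

Definition mmul (n : nat) (A B : mat) : mat :=
  fun i j => if inrange n i j then sum_f_R0 (fun k => A i k * B k j) n else 0.

Definition mid (n : nat) : mat :=
  fun i j => if inrange n i j && Nat.eqb i j then 1 else 0.

Fixpoint mpow (n : nat) (A : mat) (k : nat) : mat :=
  match k with O => mid n | S k' => mmul n A (mpow n A k') end.

Definition mvec (n : nat) (A : mat) (x : vec) : vec :=
  fun i => sum_f_R0 (fun k => A i k * x k) n.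

Definition clean (n : nat) (A : mat) : Prop :=
  forall i j, (n < i)%nat \/ (n < j)%nat -> A i j = 0.

Definition Lorentz (n : nat) (A : mat) : Prop :=
  clean n A /\ (forall x y, lor n (mvec n A x) (mvec n A y) = lor n x y) /\ 0 < A 0%nat 0%nat.

(* points of H^n and of its boundary (boundary point = null ray, normalized xi_0 = 1) *)
Definition hpt (n : nat) (x : vec) : Prop := lor n x x = -1 /\ 0 < x 0%nat.
Definition bpt (n : nat) (xi : vec) : Prop := xi 0%nat = 1 /\ lor n xi xi = 0.
Definition veq (n : nat) (x y : vec) : Prop := forall i, (i <= n)%nat -> x i = y i.

Definition fixes_pt (n : nat) (A : mat) (x : vec) : Prop := veq n (mvec n A x) x.
Definition fixes_bpt (n : nat) (A : mat) (xi : vec) : Prop :=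
  exists t, 0 < t /\ forall i, (i <= n)%nat -> mvec n A xi i = t * xi i.

Definition hyp_fixed (n : nat) (g : mat) (xi et : vec) : Prop :=
  bpt n xi /\ bpt n et /\ ~ veq n xi et /\ fixes_bpt n g xi /\ fixes_bpt n g et /\
  (forall z, bpt n z -> fixes_bpt n g z -> veq n z xi \/ veq n z et).

Definition hyperbolic (n : nat) (g : mat) : Prop :=
  (forall x, hpt n x -> ~ fixes_pt n g x) /\ exists xi et, hyp_fixed n g xi et.

(* the axis: geodesic of H^n joining the two fixed points at infinity *)
Definition axis (n : nat) (g : mat) (x : vec) : Prop :=
  exists xi et, hyp_fixed n g xi et /\ hpt n x /\
    exists a b, 0 < a /\ 0 < b /\ forall i, (i <= n)%nat -> x i = a * xi i + b * et i.

Definition Ax (n : nat) (G : mat -> Prop) (A : vec -> Prop) : Prop :=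
  exists g, G g /\ hyperbolic n g /\ forall x, A x <-> axis n g x.

Definition is_subgroup (n : nat) (K : mat -> Prop) : Prop :=
  K (mid n) /\ (forall a b, K a -> K b -> K (mmul n a b)) /\
  (forall a, K a -> exists b, K b /\ mmul n a b = mid n /\ mmul n b a = mid n).

Definition mdist_ge (n : nat) (A B : mat) (e : R) : Prop :=
  exists i j, (i <= n)%nat /\ (j <= n)%nat /\ e <= Rabs (A i j - B i j).

Definition discrete (n : nat) (G : mat -> Prop) : Prop :=
  forall g, G g -> exists e, 0 < e /\ forall h, G h -> h <> g -> mdist_ge n h g e.

Definition Kleinian (n : nat) (G : mat -> Prop) : Prop :=
  (forall g, G g -> Lorentz n g) /\ is_subgroup n G /\ discrete n G.

Definition e0 : vec := fun i => if Nat.eqb i 0 then 1 else 0.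

(* limit set: accumulation points on the boundary sphere of an orbit G.e0
   (Klein model projection x |-> x / x_0) *)
Definition limit_set (n : nat) (G : mat -> Prop) (xi : vec) : Prop :=
  bpt n xi /\ exists u : nat -> mat, (forall k, G (u k)) /\
    (forall k l, u k = u l -> k = l) /\
    forall i, (1 <= i <= n)%nat ->
      Un_cv (fun k => mvec n (u k) e0 i / mvec n (u k) e0 0%nat) (xi i).

Definition non_elementary (n : nat) (G : mat -> Prop) : Prop :=
  exists a b c, limit_set n G a /\ limit_set n G b /\ limit_set n G c /\
    ~ veq n a b /\ ~ veq n b c /\ ~ veq n a c.

Definition torsion_free (n : nat) (G : mat -> Prop) : Prop :=
  forall g, G g -> forall k, (0 < k)%nat -> mpow n g k = mid n -> g = mid n.

Definition fin_generated (n : nat) (G : mat -> Prop) : Prop :=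
  exists l : list mat, (forall a, In a l -> G a) /\
    forall K, is_subgroup n K -> (forall a, In a l -> K a) -> forall g, G g -> K g.

(** Since Ax(G) = Ax(H), some h in H has the same axis as g, hence fixes the same two
    null directions xi, et; replacing h by its inverse, g and h translate along the
    axis in opposite directions. So for every p there is q such that g^p h^q moves
    along the axis by a bounded amount; these elements of G have uniformly bounded
    matrix entries, hence by discreteness two of them coincide: g^p h^q = g^p' h^q'
    with p <> p', and g^(p'-p) is a power of h. *)

From Stdlib Require Import Reals List Arith Lra Lia Psatz ZArith Classical ClassicalEpsilon
  FunctionalExtensionality FinFun.
Open Scope R_scope.

Lemma sum_f_R0_zero (f : nat -> R) N :
  (forall k, (k <= N)%nat -> f k = 0) -> sum_f_R0 f N = 0.
Proof. intros H. rewrite (sum_eq f (fun _ => 0)) by auto. rewrite sum_cte. ring. Qed.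

Lemma sum_f_R0_delta (f : nat -> R) N i : (i <= N)%nat ->
  sum_f_R0 (fun k => if Nat.eqb k i then f k else 0) N = f i.
Proof.
  induction N as [|N IH]; intros Hi.
  - replace i with 0%nat by lia. reflexivity.
  - cbn [sum_f_R0]. destruct (Nat.eq_dec i (S N)) as [->|Hne].
    + rewrite Nat.eqb_refl, sum_f_R0_zero; [ring|].
      intros k Hk. destruct (Nat.eqb_spec k (S N)); [lia|reflexivity].
    + rewrite IH by lia. destruct (Nat.eqb_spec (S N) i); [lia|ring].
Qed.

Lemma sum_f_R0_swap (f : nat -> nat -> R) n m :
  sum_f_R0 (fun k => sum_f_R0 (fun l => f k l) m) n =
  sum_f_R0 (fun l => sum_f_R0 (fun k => f k l) n) m.
Proof. induction n as [|n IH]; simpl; [reflexivity|]. rewrite IH, <- sum_plus. reflexivity. Qed.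

Lemma sum_f_R0_nonneg (f : nat -> R) N :
  (forall k, (k <= N)%nat -> 0 <= f k) -> 0 <= sum_f_R0 f N.
Proof. intros H. rewrite <- (sum_f_R0_zero (fun _ => 0) N) by auto. apply sum_Rle. auto. Qed.

Lemma term_le_sum_f_R0 (f : nat -> R) N i :
  (forall k, (k <= N)%nat -> 0 <= f k) -> (i <= N)%nat -> f i <= sum_f_R0 f N.
Proof.
  induction N as [|N IH]; intros H Hi.
  - replace i with 0%nat by lia. simpl. lra.
  - simpl. destruct (Nat.eq_dec i (S N)) as [->|Hne].
    + assert (0 <= sum_f_R0 f N) by (apply sum_f_R0_nonneg; intros; apply H; lia). lra.
    + assert (f i <= sum_f_R0 f N) by (apply IH; intros; try apply H; lia).
      assert (0 <= f (S N)) by (apply H; lia). lra.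
Qed.

Lemma inrange_true n i j : (i <= n)%nat -> (j <= n)%nat -> inrange n i j = true.
Proof. intros Hi Hj. unfold inrange. apply andb_true_intro; split; apply Nat.leb_le; auto. Qed.

Lemma inrange_spec n i j : inrange n i j = true <-> (i <= n)%nat /\ (j <= n)%nat.
Proof. unfold inrange. rewrite Bool.andb_true_iff, !Nat.leb_le. tauto. Qed.

Lemma mmul_clean n A B : clean n (mmul n A B).
Proof.
  intros i j H. unfold mmul. destruct (inrange n i j) eqn:E; auto.
  apply inrange_spec in E. lia.
Qed.

Lemma mid_clean n : clean n (mid n).
Proof.
  intros i j H. unfold mid. destruct (inrange n i j) eqn:E; simpl; auto.
  apply inrange_spec in E. lia.
Qed.

Lemma mpow_clean n A k : clean n (mpow n A k).
Proof. destruct k; simpl; [apply mid_clean | apply mmul_clean]. Qed.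

Lemma mmul_assoc n A B C : mmul n (mmul n A B) C = mmul n A (mmul n B C).
Proof.
  extensionality i; extensionality j. unfold mmul.
  destruct (inrange n i j) eqn:E; auto. apply inrange_spec in E as [Hi Hj].
  rewrite (sum_eq _ (fun k => sum_f_R0 (fun l => A i l * B l k * C k j) n)).
  2:{ intros k Hk. rewrite inrange_true by lia. rewrite Rmult_comm, scal_sum.
      apply sum_eq; intros; ring. }
  rewrite (sum_eq (fun k => A i k * _) (fun k => sum_f_R0 (fun l => A i k * B k l * C l j) n)).
  2:{ intros k Hk. rewrite inrange_true by lia. rewrite scal_sum. apply sum_eq; intros; ring. }
  apply sum_f_R0_swap.
Qed.

Lemma mmul_mid_l n B : clean n B -> mmul n (mid n) B = B.
Proof.
  intros HB. extensionality i; extensionality j. unfold mmul.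
  destruct (inrange n i j) eqn:E.
  - apply inrange_spec in E as [Hi Hj].
    rewrite (sum_eq _ (fun k => if Nat.eqb k i then B k j else 0)).
    + apply (sum_f_R0_delta (fun k => B k j)); auto.
    + intros k Hk. unfold mid. rewrite inrange_true by lia. simpl. rewrite Nat.eqb_sym.
      destruct (Nat.eqb k i); ring.
  - symmetry. apply HB. unfold inrange in E. rewrite Bool.andb_false_iff, !Nat.leb_gt in E. auto.
Qed.

Lemma mmul_mid_r n A : clean n A -> mmul n A (mid n) = A.
Proof.
  intros HA. extensionality i; extensionality j. unfold mmul.
  destruct (inrange n i j) eqn:E.
  - apply inrange_spec in E as [Hi Hj].
    rewrite (sum_eq _ (fun k => if Nat.eqb k j then A i k else 0)).
    + apply (sum_f_R0_delta (fun k => A i k)); auto.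
    + intros k Hk. unfold mid. rewrite inrange_true by lia. simpl. destruct (Nat.eqb k j); ring.
  - symmetry. apply HA. unfold inrange in E. rewrite Bool.andb_false_iff, !Nat.leb_gt in E. auto.
Qed.

Lemma mpow_add n A a b : mpow n A (a + b) = mmul n (mpow n A a) (mpow n A b).
Proof.
  induction a as [|a IH]; simpl.
  - rewrite mmul_mid_l; auto using mpow_clean.
  - rewrite IH, mmul_assoc. reflexivity.
Qed.

Lemma mpow_in n K A k : is_subgroup n K -> K A -> K (mpow n A k).
Proof. intros [H1 [H2 _]] HA. induction k; simpl; auto. Qed.

Section Subgroup.

Variables (n : nat) (K : mat -> Prop).
Hypotheses (HK : is_subgroup n K) (HKclean : forall A, K A -> clean n A).

Lemma subgroup_cancel_l x y z : K x -> clean n y -> clean n z ->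
  mmul n x y = mmul n x z -> y = z.
Proof.
  intros Hx Hy Hz E. destruct HK as [_ [_ Hinv]]. destruct (Hinv x Hx) as [x' [_ [_ Ex]]].
  rewrite <- (mmul_mid_l n y), <- (mmul_mid_l n z), <- Ex, !mmul_assoc, E by auto. reflexivity.
Qed.

Lemma subgroup_cancel_r x y z : K x -> clean n y -> clean n z ->
  mmul n y x = mmul n z x -> y = z.
Proof.
  intros Hx Hy Hz E. destruct HK as [_ [_ Hinv]]. destruct (Hinv x Hx) as [x' [_ [Ex _]]].
  rewrite <- (mmul_mid_r n y), <- (mmul_mid_r n z), <- Ex, <- !mmul_assoc, E by auto.
  reflexivity.
Qed.

Lemma left_inverse_in_subgroup x y : K x -> clean n y -> mmul n y x = mid n -> K y.
Proof.
  intros Hx Hy E. destruct HK as [_ [_ Hinv]]. destruct (Hinv x Hx) as [x' [Hx' [Ex _]]].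
  replace y with x'; auto.
  rewrite <- (mmul_mid_l n x'), <- E, mmul_assoc, Ex, mmul_mid_r; auto.
Qed.

End Subgroup.

Definition lin (a : R) (x : vec) (b : R) (y : vec) : vec := fun k => a * x k + b * y k.
Definition basis_vec (j : nat) : vec := fun k => if Nat.eqb k j then 1 else 0.
Definition preserves_lor n (A : mat) := forall x y, lor n (mvec n A x) (mvec n A y) = lor n x y.
Definition eig n (A : mat) (x : vec) (t : R) :=
  forall i, (i <= n)%nat -> mvec n A x i = t * x i.

Lemma lor_ext n x x' y y' : veq n x x' -> veq n y y' -> lor n x y = lor n x' y'.
Proof. intros H1 H2. apply sum_eq. intros i Hi. rewrite H1, H2 by lia. reflexivity. Qed.

Lemma lor_sym n x y : lor n x y = lor n y x.
Proof. apply sum_eq. intros; ring. Qed.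

Lemma lor_lin_l n a x b y z : lor n (lin a x b y) z = a * lor n x z + b * lor n y z.
Proof. unfold lor, lin. rewrite !scal_sum, <- sum_plus. apply sum_eq. intros; ring. Qed.

Lemma lor_lin_r n a x b y z : lor n z (lin a x b y) = a * lor n z x + b * lor n z y.
Proof. rewrite lor_sym, lor_lin_l, (lor_sym n x), (lor_sym n y). ring. Qed.

Lemma lor_lin_lin n a x b y c u d v :
  lor n (lin a x b y) (lin c u d v) =
  a * c * lor n x u + a * d * lor n x v + b * c * lor n y u + b * d * lor n y v.
Proof. rewrite lor_lin_l, !lor_lin_r. ring. Qed.

Lemma lor_scale_r n c x y : lor n x (fun k => c * y k) = c * lor n x y.
Proof. unfold lor. rewrite scal_sum. apply sum_eq; intros; ring. Qed.

Lemma lor_basis_vec n j x : (j <= n)%nat -> lor n (basis_vec j) x = eta j * x j.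
Proof.
  intros Hj. unfold lor, basis_vec.
  rewrite (sum_eq _ (fun k => if Nat.eqb k j then eta k * x k else 0)).
  - apply (sum_f_R0_delta (fun k => eta k * x k)); auto.
  - intros k Hk. destruct (Nat.eqb k j); ring.
Qed.

Lemma lor_time0 n y : y 0%nat = 0 -> lor n y y = sum_f_R0 (fun k => y k * y k) n.
Proof.
  intros H. apply sum_eq. intros k Hk. unfold eta.
  destruct k; simpl; [rewrite H|]; ring.
Qed.

Lemma coord_sq_le_lor_time0 n y i : y 0%nat = 0 -> (i <= n)%nat -> y i * y i <= lor n y y.
Proof.
  intros H0 Hi. rewrite lor_time0 by auto.
  apply (term_le_sum_f_R0 (fun k => y k * y k)); auto. intros; nra.
Qed.

Lemma Rabs_eta j : Rabs (eta j) = 1.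
Proof. unfold eta. destruct (Nat.eqb j 0); [rewrite Rabs_left|rewrite Rabs_right]; lra. Qed.

Lemma mvec_ext n A x y i : veq n x y -> mvec n A x i = mvec n A y i.
Proof. intros H. apply sum_eq. intros k Hk. rewrite H by lia. reflexivity. Qed.

Lemma mvec_lin n A a x b y i : mvec n A (lin a x b y) i = a * mvec n A x i + b * mvec n A y i.
Proof. unfold mvec, lin. rewrite !scal_sum, <- sum_plus. apply sum_eq. intros; ring. Qed.

Lemma mvec_scale n A c x i : mvec n A (fun k => c * x k) i = c * mvec n A x i.
Proof. unfold mvec. rewrite scal_sum. apply sum_eq; intros; ring. Qed.

Lemma mvec_mmul n A B x i : (i <= n)%nat -> mvec n (mmul n A B) x i = mvec n A (mvec n B x) i.
Proof.
  intros Hi. unfold mvec, mmul.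
  rewrite (sum_eq _ (fun k => sum_f_R0 (fun l => A i l * B l k * x k) n)).
  2:{ intros k Hk. rewrite inrange_true by auto. rewrite Rmult_comm, scal_sum.
      apply sum_eq. intros; ring. }
  rewrite sum_f_R0_swap. apply sum_eq. intros l Hl. rewrite scal_sum. apply sum_eq. intros; ring.
Qed.

Lemma mvec_mid n x i : (i <= n)%nat -> mvec n (mid n) x i = x i.
Proof.
  intros Hi. unfold mvec, mid.
  rewrite (sum_eq _ (fun k => if Nat.eqb k i then x k else 0)).
  - apply sum_f_R0_delta; auto.
  - intros k Hk. rewrite inrange_true by auto. simpl. rewrite Nat.eqb_sym.
    destruct (Nat.eqb k i); ring.
Qed.

Lemma mvec_basis_vec n A i j : (j <= n)%nat -> mvec n A (basis_vec j) i = A i j.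
Proof.
  intros Hj. unfold mvec, basis_vec.
  rewrite (sum_eq _ (fun k => if Nat.eqb k j then A i k else 0)).
  - apply (sum_f_R0_delta (fun k => A i k)); auto.
  - intros k Hk. destruct (Nat.eqb k j); ring.
Qed.

Lemma eig_veq n A x y a : veq n x y -> eig n A x a -> eig n A y a.
Proof. intros H E i Hi. rewrite <- (mvec_ext n A x y) by auto. rewrite E, H; auto. Qed.

Lemma eig_mmul n A B x a b : eig n A x a -> eig n B x b -> eig n (mmul n A B) x (a * b).
Proof.
  intros EA EB i Hi. rewrite mvec_mmul by auto.
  rewrite (mvec_ext n A _ (fun k => b * x k)) by (intros k Hk; apply EB; auto).
  rewrite mvec_scale, EA by auto. ring.
Qed.

Lemma eig_mpow n A x a k : eig n A x a -> eig n (mpow n A k) x (a ^ k).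
Proof.
  intros E. induction k; simpl; [|apply eig_mmul; auto].
  intros i Hi. rewrite mvec_mid; auto; ring.
Qed.

Lemma eig_inv n A B x a : a <> 0 -> eig n A x a -> mmul n B A = mid n -> eig n B x (/ a).
Proof.
  intros Ha E EBA i Hi.
  assert (Hx : mvec n (mmul n B A) x i = x i) by (rewrite EBA, mvec_mid; auto).
  rewrite mvec_mmul, (mvec_ext n B _ (fun k => a * x k)), mvec_scale in Hx
    by (auto; intros k Hk; apply E; auto).
  rewrite <- Hx. field. auto.
Qed.

Lemma lor_eig_r n A x y t : preserves_lor n A -> eig n A x t ->
  t * lor n (mvec n A y) x = lor n y x.
Proof.
  intros HA E. rewrite <- (HA y x), <- lor_scale_r.
  apply lor_ext; intros k Hk; [reflexivity | symmetry; apply E; auto].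
Qed.

Lemma eig_product_one n A xi et t s : lor n xi et <> 0 -> preserves_lor n A ->
  eig n A xi t -> eig n A et s -> t * s = 1.
Proof.
  intros HL HA Ex Ee.
  assert (E := lor_eig_r n A et xi s HA Ee).
  rewrite (lor_ext n _ (fun k => t * xi k) et et), lor_sym, lor_scale_r, lor_sym in E
    by (auto; intros k Hk; reflexivity).
  apply Rmult_eq_reg_r with (lor n xi et); auto. lra.
Qed.

(** * Boundary points and axes *)

Lemma bpt_lor_neg n xi et : bpt n xi -> bpt n et -> ~ veq n xi et -> lor n xi et < 0.
Proof.
  intros [H0 H1] [H2 H3] Hne.
  set (d := lin 1 xi (-1) et).
  assert (Hd : lor n d d = -2 * lor n xi et).
  { unfold d. rewrite lor_lin_lin, H1, H3, (lor_sym n et xi). ring. }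
  assert (Hd0 : d 0%nat = 0) by (unfold d, lin; rewrite H0, H2; ring).
  destruct (Rlt_or_le (lor n xi et) 0) as [|Hle]; auto. exfalso. apply Hne.
  intros i Hi. assert (Hdi := coord_sq_le_lor_time0 n d i Hd0 Hi).
  assert (d i = 0) by nra. unfold d, lin in *. lra.
Qed.

Lemma bpt_coord_bound n xi i : bpt n xi -> (i <= n)%nat -> Rabs (xi i) <= 1.
Proof.
  intros [H0 H1] Hi. destruct i as [|i]; [rewrite H0, Rabs_R1; lra|].
  set (y := lin 1 xi (-1) (basis_vec 0)).
  assert (Hy0 : y 0%nat = 0) by (unfold y, lin, basis_vec; simpl; rewrite H0; ring).
  assert (Hy : lor n y y = 1).
  { unfold y. rewrite lor_lin_lin, H1, (lor_sym n xi (basis_vec 0)), !lor_basis_vec by lia.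
    unfold basis_vec, eta; simpl. rewrite H0. ring. }
  assert (Hyi := coord_sq_le_lor_time0 n y (S i) Hy0 Hi). rewrite Hy in Hyi.
  unfold y, lin, basis_vec in Hyi; simpl in Hyi. apply Rabs_le. nra.
Qed.

Lemma hpt_lin n xi et a b : bpt n xi -> bpt n et -> 0 < a -> 0 < b ->
  2 * a * b * lor n xi et = -1 -> hpt n (lin a xi b et).
Proof.
  intros [H0 H1] [H2 H3] Ha Hb E. split.
  - rewrite lor_lin_lin, H1, H3, (lor_sym n et xi). lra.
  - unfold lin. rewrite H0, H2. lra.
Qed.

Lemma midpoint_scale (L : R) : L < 0 -> exists a, 0 < a /\ 2 * a * a * L = -1.
Proof.
  intros HL. exists (/ sqrt (-2 * L)).
  assert (0 < sqrt (-2 * L)) by (apply sqrt_lt_R0; lra).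
  split; [apply Rinv_0_lt_compat; auto|].
  replace (2 * / sqrt (-2 * L) * / sqrt (-2 * L) * L)
    with (- (-2 * L) / (sqrt (-2 * L) * sqrt (-2 * L))) by (field; lra).
  rewrite sqrt_sqrt by lra. field. lra.
Qed.

(* Otherwise A would fix the point of H^n on the axis between xi and et. *)
Lemma fixed_point_free_eigenvalue_ne1 n A xi et t s :
  bpt n xi -> bpt n et -> lor n xi et < 0 -> preserves_lor n A ->
  eig n A xi t -> eig n A et s -> (forall x, hpt n x -> ~ fixes_pt n A x) -> t <> 1.
Proof.
  intros Hx He HL HA Ex Ee Hno Ht.
  assert (Hs : s = 1) by (pose proof (eig_product_one n A xi et t s ltac:(lra) HA Ex Ee); nra).
  destruct (midpoint_scale _ HL) as [a [Ha Ha2]].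
  apply (Hno (lin a xi a et)); [apply hpt_lin; auto|].
  intros i Hi. rewrite mvec_lin, Ex, Ee by auto. subst. unfold lin. ring.
Qed.

Lemma null_in_plane n v x y p q : bpt n v -> bpt n x -> bpt n y -> lor n x y < 0 ->
  veq n v (lin p x q y) -> veq n v x \/ veq n v y.
Proof.
  intros [Hv0 Hvv] [Hx0 Hxx] [Hy0 Hyy] HL E.
  rewrite (lor_ext n v (lin p x q y) v (lin p x q y)) in Hvv by auto.
  rewrite lor_lin_lin, Hxx, Hyy, (lor_sym n y x) in Hvv.
  assert (Hpq : p * q = 0) by nra.
  assert (Hv0' := E 0%nat (Nat.le_0_l n)). unfold lin in Hv0'. rewrite Hv0, Hx0, Hy0 in Hv0'.
  destruct (Rmult_integral _ _ Hpq) as [->| ->]; [right|left];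
    intros i Hi; rewrite E by auto; unfold lin.
  - replace q with 1 by lra. ring.
  - replace p with 1 by lra. ring.
Qed.

Lemma hyp_fixed_sym n g xi et : hyp_fixed n g xi et -> hyp_fixed n g et xi.
Proof.
  intros [Hxi [Het [Hne [Fx [Fe Hall]]]]].
  refine (conj Het (conj Hxi (conj _ (conj Fe (conj Fx _))))).
  - intros E. apply Hne. intros i Hi. symmetry. auto.
  - intros z Hz Fz. destruct (Hall z Hz Fz); auto.
Qed.

Lemma axis_in_span n h xi et x : hyp_fixed n h xi et -> axis n h x ->
  exists p q, veq n x (lin p xi q et).
Proof.
  intros [_ [_ [_ [_ [_ Hall]]]]] [a [b [[Ha [Hb [Hne [Fa [Fb _]]]]] [_ [p [q [_ [_ E]]]]]]]].
  destruct (Hall a Ha Fa) as [A1|A1]; destruct (Hall b Hb Fb) as [B1|B1];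
    try (exfalso; apply Hne; intros i Hi; rewrite A1, B1; auto; fail).
  - exists p, q. intros i Hi. rewrite E by auto. unfold lin. rewrite A1, B1; auto.
  - exists q, p. intros i Hi. rewrite E by auto. unfold lin. rewrite A1, B1 by auto. ring.
Qed.

Lemma axis_endpoint_in_span n g h xi et xi' et' :
  hyp_fixed n g xi et -> hyp_fixed n h xi' et' -> (forall x, axis n g x -> axis n h x) ->
  exists p q, veq n xi (lin p xi' q et').
Proof.
  intros Hg Hh Hax. pose proof Hg as [Hxi [Het [Hne _]]].
  destruct (midpoint_scale _ (bpt_lor_neg n xi et Hxi Het Hne)) as [a [Ha Ha2]].
  assert (Haxis : forall b c, 0 < b -> 0 < c -> b * c = a * a -> axis n g (lin b xi c et)).
  { intros b c Hb Hc Hbc. exists xi, et. split; [auto|]. split.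
    { apply hpt_lin; auto. replace (2 * b * c) with (2 * (b * c)) by ring. rewrite Hbc. lra. }
    exists b, c. repeat split; auto. }
  destruct (axis_in_span _ _ _ _ _ Hh (Hax _ (Haxis a a Ha Ha eq_refl))) as [p1 [q1 E1]].
  destruct (axis_in_span _ _ _ _ _ Hh (Hax _ (Haxis (2 * a) (a / 2) ltac:(lra) ltac:(lra)
    ltac:(field)))) as [p2 [q2 E2]].
  (* (2a xi + a/2 et) - (a xi + a et)/2 = 3a/2 xi *)
  exists ((2 * p2 - p1) / (3 * a)), ((2 * q2 - q1) / (3 * a)).
  intros i Hi. specialize (E1 i Hi). specialize (E2 i Hi). unfold lin in *.
  apply Rmult_eq_reg_l with (3 * a); [|lra]. field_simplify; [|lra]. lra.
Qed.

Lemma shared_axis_endpoint_eig n g h xi et :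
  hyp_fixed n g xi et -> hyperbolic n h -> (forall x, axis n g x -> axis n h x) ->
  exists t, 0 < t /\ eig n h xi t.
Proof.
  intros Hg [_ [xi' [et' Hh]]] Hax.
  destruct (axis_endpoint_in_span n g h xi et xi' et' Hg Hh Hax) as [p [q E]].
  pose proof Hg as [Hxi _]. pose proof Hh as [Hxi' [Het' [Hne' [[t1 [Ht1 F1]] [[t2 [Ht2 F2]] _]]]]].
  destruct (null_in_plane n xi xi' et' p q Hxi Hxi' Het' (bpt_lor_neg _ _ _ Hxi' Het' Hne') E)
    as [V|V]; [exists t1 | exists t2]; split; auto;
    eapply eig_veq; [intros i Hi; symmetry; apply V; auto | assumption
                    | intros i Hi; symmetry; apply V; auto | assumption].
Qed.

(** * Bounded entries *)

Definition bounded_by n (B : R) (A : mat) :=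
  forall i j, (i <= n)%nat -> (j <= n)%nat -> Rabs (A i j) <= B.

Definition time_bound (M L : R) : R := 1 + (4 + 8 * M) / (-2 * L).
Definition entry_bound (M L : R) : R := 2 + 2 * time_bound M L * M + time_bound M L.

Lemma Rabs_le_inv a b : Rabs a <= b -> - b <= a <= b.
Proof. intros H. pose proof (Rle_abs a). pose proof (Rabs_pos a). split; [|lra].
  destruct (Rle_or_lt 0 a); [lra|]. rewrite Rabs_left in H; lra. Qed.

Lemma Rabs_le_of_quadratic (K M w : R) : 0 < K -> 0 <= M ->
  K * (w * w) <= 4 + 8 * M * Rabs w -> Rabs w <= 1 + (4 + 8 * M) / K.
Proof.
  intros HK HM H.
  assert (0 <= (4 + 8 * M) / K)
    by (unfold Rdiv; apply Rmult_le_pos; [|left; apply Rinv_0_lt_compat]; lra).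
  destruct (Rle_or_lt (Rabs w) 1); [lra|].
  replace (w * w) with (Rabs w * Rabs w) in H
    by (rewrite <- Rabs_mult; apply Rabs_right; nra).
  assert (K * Rabs w <= 4 + 8 * M) by (apply Rmult_le_reg_r with (Rabs w); nra).
  assert (Rabs w <= (4 + 8 * M) / K) by (apply Rmult_le_reg_l with K; [lra|];
    replace (K * ((4 + 8 * M) / K)) with (4 + 8 * M) by (field; lra); lra).
  lra.
Qed.

Lemma lor_time0_diff_le n y y' : y 0%nat = 0 -> y' 0%nat = 0 ->
  lor n (lin 1 y (-1) y') (lin 1 y (-1) y') <= 2 * lor n y y + 2 * lor n y' y'.
Proof.
  intros H0 H0'. assert (HD0 : lin 1 y (-1) y' 0%nat = 0) by (unfold lin; rewrite H0, H0'; ring).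
  rewrite !lor_time0, !scal_sum, <- sum_plus by auto.
  apply sum_Rle. intros k Hk. unfold lin.
  pose proof (Rle_0_sqr (y k + y' k)). unfold Rsqr in *. lra.
Qed.

Section NullFrame.

Variables (n : nat) (xi et w : vec) (M : R).
Hypotheses (Hxi : bpt n xi) (Het : bpt n et) (HL : lor n xi et < 0) (HM : 0 <= M)
  (Hwxi : Rabs (lor n w xi) <= M) (Hwet : Rabs (lor n w et) <= M) (Hww : Rabs (lor n w w) <= 1).

Lemma lor_sub_time (x : vec) : bpt n x ->
  lor n (lin 1 w (- w 0%nat) x) (lin 1 w (- w 0%nat) x) = lor n w w - 2 * w 0%nat * lor n w x.
Proof. intros [_ Hxx]. rewrite lor_lin_lin, Hxx, (lor_sym n x w). ring. Qed.

Lemma null_frame_time_bound : Rabs (w 0%nat) <= time_bound M (lor n xi et).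
Proof.
  pose proof Hxi as [Hx0 Hxx]. pose proof Het as [He0 Hee].
  assert (Hle := lor_time0_diff_le n (lin 1 w (- w 0%nat) xi) (lin 1 w (- w 0%nat) et)
    ltac:(unfold lin; rewrite Hx0; ring) ltac:(unfold lin; rewrite He0; ring)).
  rewrite (lor_sub_time xi Hxi), (lor_sub_time et Het) in Hle.
  (* the difference of the two projections is w0 (et - xi) *)
  rewrite (lor_ext n _ (lin (w 0%nat) et (- w 0%nat) xi) _ (lin (w 0%nat) et (- w 0%nat) xi)),
    lor_lin_lin, Hxx, Hee, (lor_sym n et xi) in Hle by (intros k Hk; unfold lin; ring).
  apply Rabs_le_of_quadratic; [lra | auto |].
  apply Rabs_le_inv in Hwxi, Hwet, Hww.
  destruct (Rle_or_lt 0 (w 0%nat)); [rewrite Rabs_right | rewrite Rabs_left]; nra.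
Qed.

Lemma null_frame_coord_bound i : (i <= n)%nat -> Rabs (w i) <= entry_bound M (lor n xi et).
Proof.
  intros Hi. pose proof Hxi as [Hx0 _].
  assert (Bw0 := null_frame_time_bound). set (R0 := time_bound M (lor n xi et)) in *.
  set (z := lin 1 w (- w 0%nat) xi).
  assert (Hzi : z i * z i <= 1 + 2 * R0 * M).
  { assert (Hz := coord_sq_le_lor_time0 n z i ltac:(unfold z, lin; rewrite Hx0; ring) Hi).
    unfold z in Hz. rewrite lor_sub_time in Hz by auto. fold z in Hz.
    assert (Rabs (w 0%nat * lor n w xi) <= R0 * M)
      by (rewrite Rabs_mult; apply Rmult_le_compat; auto using Rabs_pos).
    apply Rabs_le_inv in H, Hww. nra. }
  replace (w i) with (z i + w 0%nat * xi i) by (unfold z, lin; ring).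
  eapply Rle_trans; [apply Rabs_triang|].
  assert (Rabs (z i) <= 1 + z i * z i)
    by (destruct (Rle_or_lt 0 (z i)); [rewrite Rabs_right | rewrite Rabs_left]; nra).
  assert (Rabs (w 0%nat * xi i) <= R0).
  { rewrite Rabs_mult. pose proof (bpt_coord_bound n xi i Hxi Hi).
    pose proof (Rabs_pos (w 0%nat)). pose proof (Rabs_pos (xi i)). nra. }
  unfold entry_bound. fold R0. lra.
Qed.

End NullFrame.

(* A fixes the null directions xi, et and translates along the geodesic joining them
   by at most ln M. *)
Definition short_translation n (xi et : vec) (M : R) (A : mat) :=
  exists t s, / M <= t <= M /\ eig n A xi t /\ eig n A et s.

Lemma short_translation_bounded n xi et M A :
  bpt n xi -> bpt n et -> lor n xi et < 0 -> 1 <= M -> preserves_lor n A ->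
  short_translation n xi et M A -> bounded_by n (entry_bound M (lor n xi et)) A.
Proof.
  intros Hxi Het HL HM HA [t [s [Ht [Ex Ee]]]] i j Hi Hj.
  assert (Hts := eig_product_one n A xi et t s ltac:(lra) HA Ex Ee).
  assert (HMi : / M * M = 1) by (field; lra).
  assert (Ht0 : 0 < t) by (pose proof (Rinv_0_lt_compat M ltac:(lra)); lra).
  rewrite <- (mvec_basis_vec n A i j Hj).
  set (w := mvec n A (basis_vec j)).
  assert (Hwx := lor_eig_r n A xi (basis_vec j) t HA Ex). fold w in Hwx.
  assert (Hwe := lor_eig_r n A et (basis_vec j) s HA Ee). fold w in Hwe.
  rewrite lor_basis_vec in Hwx, Hwe by auto.
  apply null_frame_coord_bound; auto; try lra.
  - replace (lor n w xi) with (/ t * (eta j * xi j))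
      by (rewrite <- Hwx; field; apply Rgt_not_eq; lra).
    rewrite !Rabs_mult, Rabs_eta, Rabs_inv, (Rabs_right t) by lra.
    assert (/ t <= M) by (apply Rmult_le_reg_l with t; [lra|]; rewrite Rinv_r; nra).
    pose proof (bpt_coord_bound n xi j Hxi Hj). pose proof (Rabs_pos (xi j)).
    assert (0 < / t) by (apply Rinv_0_lt_compat; lra). nra.
  - replace (lor n w et) with (t * (eta j * et j))
      by (rewrite <- Hwe, <- Rmult_assoc, Hts; ring).
    rewrite !Rabs_mult, Rabs_eta, (Rabs_right t) by lra.
    pose proof (bpt_coord_bound n et j Het Hj). pose proof (Rabs_pos (et j)). nra.
  - unfold w. rewrite HA, lor_basis_vec by auto.
    unfold basis_vec. rewrite Nat.eqb_refl, Rmult_1_r, Rabs_eta. lra.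
Qed.

Lemma short_translation_inv n xi et M A B :
  lor n xi et <> 0 -> 1 <= M -> preserves_lor n A ->
  short_translation n xi et M A -> mmul n B A = mid n -> short_translation n xi et M B.
Proof.
  intros HL HM HA [t [s [Ht [Ex Ee]]]] EBA.
  assert (Hts := eig_product_one n A xi et t s HL HA Ex Ee).
  exists (/ t), (/ s). split; [|split; apply (eig_inv n A); auto; intros ->; lra].
  assert (0 < / M) by (apply Rinv_0_lt_compat; lra).
  split; [apply Rinv_le_contravar; lra|].
  rewrite <- (Rinv_inv M). apply Rinv_le_contravar; lra.
Qed.

(** * Pigeonhole for bounded families of matrices *)

Fixpoint bounded_lists (m N : nat) : list (list nat) :=
  match m with
  | O => nil :: nil
  | S m' => flat_map (fun c => map (cons c) (bounded_lists m' N)) (seq 0 (S N))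
  end.

Lemma in_bounded_lists N l : Forall (fun c => (c <= N)%nat) l -> In l (bounded_lists (length l) N).
Proof.
  induction l as [|a l IH]; intros HF; cbn [length bounded_lists]; [left; auto|].
  inversion HF; subst. apply in_flat_map. exists a. split; [apply in_seq; lia | apply in_map; auto].
Qed.

Lemma bounded_lists_collision m N (f : nat -> list nat) :
  (forall p, length (f p) = m /\ Forall (fun c => (c <= N)%nat) (f p)) ->
  exists p p', p <> p' /\ f p = f p'.
Proof.
  intros Hf. apply NNPP. intros Hno.
  set (P := length (bounded_lists m N)).
  assert (ND : NoDup (map f (seq 0 (S P)))).
  { apply Injective_map_NoDup; [|apply seq_NoDup].
    intros p p' E. destruct (Nat.eq_dec p p'); auto. exfalso. eauto. }
  assert (INC : incl (map f (seq 0 (S P))) (bounded_lists m N)).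
  { intros l Hl. apply in_map_iff in Hl as [p [<- _]].
    destruct (Hf p) as [<- HF]. apply in_bounded_lists, HF. }
  apply NoDup_incl_length in INC; auto.
  rewrite length_map, length_seq in INC. unfold P in INC. lia.
Qed.

Lemma up_le a b : a <= b -> (up a <= up b)%Z.
Proof.
  intros H. destruct (archimed a) as [A1 A2]. destruct (archimed b) as [B1 B2].
  assert (IZR (up a) < IZR (up b + 1)) by (rewrite plus_IZR; lra).
  apply lt_IZR in H0. lia.
Qed.

Lemma up_nonneg a : 0 <= a -> (0 <= up a)%Z.
Proof. intros H. destruct (archimed a) as [A1 A2]. apply le_IZR. lra. Qed.

Lemma up_eq_close a b : up a = up b -> Rabs (a - b) < 1.
Proof.
  intros E. destruct (archimed a) as [A1 A2]. destruct (archimed b) as [B1 B2].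
  rewrite E in A1, A2. apply Rabs_def1; lra.
Qed.

Section Grid.

Variables (B d : R).
Hypothesis (Hd : 0 < d).

Definition cell (x : R) : nat := Z.to_nat (up ((x + B) / d)).
Definition cell_count : nat := Z.to_nat (up (2 * B / d)).

Lemma cell_arg_range x : Rabs x <= B -> 0 <= (x + B) / d <= 2 * B / d.
Proof.
  intros Hx. apply Rabs_le_inv in Hx. assert (0 < / d) by (apply Rinv_0_lt_compat; lra).
  unfold Rdiv. split; [apply Rmult_le_pos | apply Rmult_le_compat_r]; lra.
Qed.

Lemma cell_le_count x : Rabs x <= B -> (cell x <= cell_count)%nat.
Proof.
  intros Hx. pose proof (cell_arg_range x Hx).
  unfold cell, cell_count. apply Z2Nat.inj_le; try apply up_nonneg; try apply up_le; lra.
Qed.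

Lemma cell_eq_close x y : Rabs x <= B -> Rabs y <= B -> cell x = cell y -> Rabs (x - y) < d.
Proof.
  intros Hx Hy E. pose proof (cell_arg_range x Hx). pose proof (cell_arg_range y Hy).
  apply Z2Nat.inj in E; try (apply up_nonneg; lra).
  apply up_eq_close in E.
  replace ((x + B) / d - (y + B) / d) with ((x - y) / d) in E by (field; lra).
  unfold Rdiv in E. rewrite Rabs_mult, (Rabs_right (/ d)) in E
    by (left; apply Rinv_0_lt_compat; lra).
  apply Rmult_lt_reg_r with (/ d); [apply Rinv_0_lt_compat; lra|]. rewrite Rinv_r; lra.
Qed.

End Grid.

Lemma bounded_family_close n (F : nat -> mat) B d : 0 < d -> (forall p, bounded_by n B (F p)) ->
  exists p p', p <> p' /\
    forall i j, (i <= n)%nat -> (j <= n)%nat -> Rabs (F p i j - F p' i j) < d.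
Proof.
  intros Hd HB.
  set (idx := list_prod (seq 0 (S n)) (seq 0 (S n))).
  assert (Hidx : forall i j, In (i, j) idx <-> (i <= n)%nat /\ (j <= n)%nat).
  { intros i j. unfold idx. rewrite in_prod_iff, !in_seq. lia. }
  set (code p := map (fun ij => cell B d (F p (fst ij) (snd ij))) idx).
  destruct (bounded_lists_collision (length idx) (cell_count B d) code) as [p [p' [Hne E]]].
  { intros p. split; [apply length_map|]. apply Forall_forall. intros c Hc.
    apply in_map_iff in Hc as [[i j] [<- Hij]]. apply Hidx in Hij as [Hi Hj].
    apply cell_le_count, HB; auto. }
  exists p, p'. split; auto. intros i j Hi Hj.
  apply (cell_eq_close B d); try apply HB; auto.
  apply map_ext_in_iff with (a := (i, j)) in E; [exact E | apply Hidx; auto].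
Qed.

Lemma mmul_entry_close n A X Y B d i j : (i <= n)%nat -> (j <= n)%nat -> bounded_by n B A ->
  (forall k, (k <= n)%nat -> Rabs (X k j - Y k j) <= d) ->
  Rabs (mmul n A X i j - mmul n A Y i j) <= INR (S n) * B * d.
Proof.
  intros Hi Hj HA HXY. unfold mmul. rewrite inrange_true, <- minus_sum by auto.
  eapply Rle_trans; [apply Rsum_abs|].
  replace (INR (S n) * B * d) with (sum_f_R0 (fun _ => B * d) n) by (rewrite sum_cte; ring).
  apply sum_Rle. intros k Hk. rewrite <- Rmult_minus_distr_l, Rabs_mult.
  apply Rmult_le_compat; auto using Rabs_pos.
Qed.

Lemma kleinian_bounded_repeats n G (P : mat -> Prop) B (W : nat -> mat) :
  Kleinian n G ->
  (forall A, G A -> P A -> bounded_by n B A) ->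
  (forall A C, G A -> P A -> mmul n C A = mid n -> P C) ->
  (forall p, G (W p) /\ P (W p)) ->
  exists p p', p <> p' /\ W p = W p'.
Proof.
  intros [HLor [HGs Hdisc]] HPB HPinv HW.
  assert (Gclean : forall A, G A -> clean n A) by (intros A HA; apply HLor, HA).
  pose proof HGs as [Gmid [Gmul Ginv]].
  destruct (Hdisc (mid n) Gmid) as [e [He Hsep]].
  assert (HB : forall p, bounded_by n B (W p)) by (intros p; apply HPB; apply HW).
  assert (HB0 : 0 <= B) by (eapply Rle_trans; [apply Rabs_pos | apply (HB 0%nat 0%nat 0%nat); lia]).
  assert (HnB : 0 <= INR (S n) * B) by (apply Rmult_le_pos; auto using pos_INR).
  set (d := e / (INR (S n) * B + 1)).
  assert (Hd : 0 < d) by (apply Rdiv_lt_0_compat; lra).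
  assert (Hde : INR (S n) * B * d < e).
  { apply Rmult_lt_reg_r with (INR (S n) * B + 1); [lra|].
    replace (INR (S n) * B * d * (INR (S n) * B + 1)) with (INR (S n) * B * e)
      by (unfold d; field; lra). nra. }
  destruct (bounded_family_close n W B d Hd HB) as [p [p' [Hne Hclose]]].
  exists p, p'. split; auto.
  destruct (HW p) as [GWp PWp], (HW p') as [GWp' _]. destruct (Ginv _ GWp) as [b [Gb [Eb1 Eb2]]].
  assert (Bb : bounded_by n B b) by (apply HPB; eauto).
  destruct (classic (mmul n b (W p') = mid n)) as [Hid|Hid].
  - apply (subgroup_cancel_l n G HGs b); auto using Gclean. congruence.
  - exfalso. destruct (Hsep _ (Gmul _ _ Gb GWp') Hid) as [i [j [Hi [Hj Hge]]]].
    rewrite <- Eb2 in Hge.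
    assert (Hle : Rabs (mmul n b (W p') i j - mmul n b (W p) i j) <= INR (S n) * B * d).
    { apply mmul_entry_close; auto. intros k Hk. rewrite <- Rabs_Ropp, Ropp_minus_distr.
      left. apply Hclose; auto. }
    lra.
Qed.

(** * Balancing the translations of g and h *)

Lemma pow_window_descend s x N : 0 < s < 1 -> s <= x -> x * s ^ N <= 1 ->
  exists q, s <= x * s ^ q <= 1.
Proof.
  intros Hs Hx. induction N as [|N IH]; intros HN.
  - exists 0%nat. simpl in *. lra.
  - destruct (Rle_or_lt (x * s ^ N) 1) as [H|H]; [auto|].
    exists (S N). split; [simpl; nra | auto].
Qed.

Lemma pow_window T s p : 1 < T -> 0 < s < 1 -> exists q, s <= T ^ p * s ^ q <= 1.
Proof.
  intros HT Hs.
  assert (HTp : 1 <= T ^ p) by (apply pow_R1_Rle; lra).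
  destruct (pow_lt_1_zero s ltac:(rewrite Rabs_right; lra) (/ T ^ p)) as [N HN].
  { apply Rinv_0_lt_compat; lra. }
  apply (pow_window_descend s _ N); [auto | lra |].
  specialize (HN N (le_n N)). rewrite Rabs_right in HN by (left; apply pow_lt; lra).
  apply Rmult_lt_compat_l with (r := T ^ p) in HN; [|lra]. rewrite Rinv_r in HN; lra.
Qed.

Lemma pow_balance T s : 0 < T -> 0 < s -> (T - 1) * (s - 1) < 0 ->
  exists M, 1 <= M /\ exists q : nat -> nat, forall p, / M <= T ^ p * s ^ q p <= M.
Proof.
  intros HT Hs Hopp.
  assert (Hq : exists M, 1 <= M /\ forall p, exists q, / M <= T ^ p * s ^ q <= M).
  { destruct (Rlt_or_le 1 T) as [HT1|HT1].
    - assert (Hs1 : s < 1) by nra. exists (/ s).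
      split; [rewrite <- Rinv_1; apply Rinv_le_contravar; lra|].
      intros p. destruct (pow_window T s p HT1 ltac:(lra)) as [q Hq]. exists q.
      rewrite Rinv_inv. assert (1 <= / s) by (rewrite <- Rinv_1; apply Rinv_le_contravar; lra).
      lra.
    - assert (HT1' : T < 1) by (destruct HT1; [auto | subst; lra]).
      assert (Hs1 : 1 < s) by nra. exists s. split; [lra|]. intros p.
      destruct (pow_window (/ T) (/ s) p) as [q Hq].
      { rewrite <- Rinv_1. apply Rinv_lt_contravar; lra. }
      { split; [apply Rinv_0_lt_compat; lra | rewrite <- Rinv_1; apply Rinv_lt_contravar; lra]. }
      exists q. rewrite !pow_inv, <- Rinv_mult in Hq.
      assert (HX : 0 < T ^ p * s ^ q) by (apply Rmult_lt_0_compat; apply pow_lt; lra).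
      destruct Hq as [Hq1 Hq2].
      apply Rinv_le_contravar in Hq1; [|apply Rinv_0_lt_compat; auto].
      apply Rinv_le_contravar in Hq2; [|apply Rinv_0_lt_compat; auto].
      rewrite !Rinv_inv, Rinv_1 in *.
      assert (/ s <= 1) by (rewrite <- Rinv_1; apply Rinv_le_contravar; lra). lra. }
  destruct Hq as [M [HM Hq]]. exists M. split; auto.
  exists (fun p => proj1_sig (constructive_indefinite_description _ (Hq p))).
  intros p. exact (proj2_sig (constructive_indefinite_description _ (Hq p))).
Qed.

Lemma opposite_translation n H h xi et th sh tg :
  is_subgroup n H -> H h -> 0 < th -> 0 < sh -> th <> 1 -> eig n h xi th -> eig n h et sh ->
  0 < tg -> tg <> 1 ->
  exists u su su', H u /\ 0 < su /\ 0 < su' /\ eig n u xi su /\ eig n u et su' /\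
    (tg - 1) * (su - 1) < 0.
Proof.
  intros HHs Hh Hth Hsh Hth1 Eh Fh Htg Htg1.
  assert (Hprod : (tg - 1) * (th - 1) <> 0)
    by (intros Z; apply Rmult_integral in Z as [Z|Z]; [apply Htg1 | apply Hth1]; lra).
  destruct (Rlt_or_le ((tg - 1) * (th - 1)) 0) as [Hlt|Hge].
  - exists h, th, sh. repeat split; auto.
  - pose proof HHs as [_ [_ Hinv]]. destruct (Hinv h Hh) as [hi [Hhi [_ Ehi]]].
    exists hi, (/ th), (/ sh). repeat split; auto using Rinv_0_lt_compat;
      try (apply (eig_inv n h); auto; lra).
    replace (/ th - 1) with (- (th - 1) / th) by (field; lra).
    assert (0 < (tg - 1) * (th - 1) / th) by (apply Rdiv_lt_0_compat; lra).
    replace ((tg - 1) * (- (th - 1) / th)) with (- ((tg - 1) * (th - 1) / th)) by (field; lra).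
    lra.
Qed.

Lemma shared_axis_opposite_translation n H g h xi et tg :
  is_subgroup n H -> H h -> hyperbolic n h -> preserves_lor n h -> hyp_fixed n g xi et ->
  (forall x, axis n g x -> axis n h x) -> 0 < tg -> tg <> 1 ->
  exists u su su', H u /\ 0 < su /\ 0 < su' /\ eig n u xi su /\ eig n u et su' /\
    (tg - 1) * (su - 1) < 0.
Proof.
  intros HHs Hh Hhyp Hpres Hgf Hgh Htg Htg1.
  pose proof Hgf as [Hxi [Het [Hne _]]].
  destruct (shared_axis_endpoint_eig n g h xi et Hgf Hhyp Hgh) as [th [Hth Eh]].
  destruct (shared_axis_endpoint_eig n g h et xi (hyp_fixed_sym n g xi et Hgf) Hhyp Hgh)
    as [sh [Hsh Fh]].
  apply (opposite_translation n H h xi et th sh tg); auto.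
  exact (fixed_point_free_eigenvalue_ne1 n h xi et th sh Hxi Het (bpt_lor_neg n xi et Hxi Het Hne)
    Hpres Eh Fh (proj1 Hhyp)).
Qed.

Lemma collision_lt n G H g u p q p' q' :
  is_subgroup n G -> (forall A, G A -> clean n A) -> is_subgroup n H -> (forall A, H A -> G A) ->
  G g -> H u -> (p < p')%nat ->
  mmul n (mpow n g p) (mpow n u q) = mmul n (mpow n g p') (mpow n u q') ->
  H (mpow n g (p' - p)).
Proof.
  intros HGs Gclean HHs HHG Hg Hu Hlt E.
  assert (Gu : G u) by auto.
  replace p' with (p + (p' - p))%nat in E by lia. set (d := (p' - p)%nat) in *.
  rewrite mpow_add, mmul_assoc in E.
  apply (subgroup_cancel_l n G HGs (mpow n g p) _ _ (mpow_in n G g p HGs Hg)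
    (mpow_clean n u q) (mmul_clean n _ _)) in E.
  destruct (le_lt_dec q' q).
  - replace q with ((q - q') + q')%nat in E by lia. rewrite mpow_add in E.
    rewrite <- (subgroup_cancel_r n G HGs (mpow n u q') _ _ (mpow_in n G u q' HGs Gu)
      (mpow_clean n u _) (mpow_clean n g d) E).
    apply mpow_in; auto.
  - (* u^q = g^d u^(q'-q) u^q, so g^d is the inverse of u^(q'-q) *)
    replace q' with ((q' - q) + q)%nat in E by lia. rewrite mpow_add, <- mmul_assoc in E.
    rewrite <- (mmul_mid_l n (mpow n u q)) in E at 1 by apply mpow_clean.
    assert (Einv := subgroup_cancel_r n G HGs (mpow n u q) _ _ (mpow_in n G u q HGs Gu)
      (mid_clean n) (mmul_clean n _ _) E).
    apply (left_inverse_in_subgroup n H HHs (fun A HA => Gclean A (HHG A HA))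
      (mpow n u (q' - q))); [apply mpow_in; auto | apply mpow_clean | symmetry; exact Einv].
Qed.

Lemma collision n G H g u p q p' q' :
  is_subgroup n G -> (forall A, G A -> clean n A) -> is_subgroup n H -> (forall A, H A -> G A) ->
  G g -> H u -> p <> p' ->
  mmul n (mpow n g p) (mpow n u q) = mmul n (mpow n g p') (mpow n u q') ->
  exists k, (0 < k)%nat /\ H (mpow n g k).
Proof.
  intros HGs Gclean HHs HHG Hg Hu Hne E.
  destruct (proj1 (Nat.lt_gt_cases p p') Hne) as [Hlt|Hlt].
  - exists (p' - p)%nat. split; [lia|].
    exact (collision_lt n G H g u p q p' q' HGs Gclean HHs HHG Hg Hu Hlt E).
  - exists (p - p')%nat. split; [lia|].
    exact (collision_lt n G H g u p' q' p q HGs Gclean HHs HHG Hg Hu Hlt (eq_sym E)).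
Qed.

Theorem lemma2p9 (n : nat) (G H : mat -> Prop) :
  Kleinian n G -> non_elementary n G -> fin_generated n G -> torsion_free n G ->
  is_subgroup n H -> (forall h, H h -> G h) ->
  (forall A, Ax n G A <-> Ax n H A) ->
  forall g, G g -> hyperbolic n g -> exists k, (0 < k)%nat /\ H (mpow n g k).
Proof.
  intros HK _ _ _ HHs HHG HAx g Hg Hhyp.
  pose proof HK as [HLor [HGs _]].
  assert (Gpres : forall A, G A -> preserves_lor n A)
    by (intros A HA; exact (proj1 (proj2 (HLor A HA)))).
  assert (Gclean : forall A, G A -> clean n A) by (intros A HA; exact (proj1 (HLor A HA))).
  pose proof Hhyp as [Hno [xi [et Hgf]]].
  pose proof Hgf as [Hxi [Het [Hne [[tg [Htg Eg]] [[sg [Hsg Fg]] _]]]]].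
  assert (HL := bpt_lor_neg n xi et Hxi Het Hne).
  destruct (proj1 (HAx (axis n g)) (ex_intro _ g (conj Hg (conj Hhyp (fun x => iff_refl _)))))
    as [h [Hh [Hhh Hax]]].
  destruct (shared_axis_opposite_translation n H g h xi et tg HHs Hh Hhh (Gpres h (HHG h Hh)) Hgf
    (fun x => proj1 (Hax x)) Htg
    (fixed_point_free_eigenvalue_ne1 n g xi et tg sg Hxi Het HL (Gpres g Hg) Eg Fg Hno))
    as [u [su [su' [Hu [Hsu [Hsu' [Eu [Fu Hopp]]]]]]]].
  destruct (pow_balance tg su Htg Hsu Hopp) as [M [HM [q Hq]]].
  destruct (kleinian_bounded_repeats n G (short_translation n xi et M)
    (entry_bound M (lor n xi et)) (fun p => mmul n (mpow n g p) (mpow n u (q p))) HK)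
    as [p [p' [Hpp E]]].
  - intros A HA. apply short_translation_bounded; auto.
  - intros A C HA. apply short_translation_inv; auto. lra.
  - intros p. split; [apply HGs; apply mpow_in; auto|].
    exists (tg ^ p * su ^ q p), (sg ^ p * su' ^ q p).
    split; [apply Hq | split; apply eig_mmul; apply eig_mpow; auto].
  - exact (collision n G H g u p (q p) p' (q p') HGs Gclean HHs HHG Hg Hu Hpp E).
Qed.
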